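(* Let $f:2^V\to\mathbb{Z}_{\ge0}$ be a connectivity function, $W\subseteq V$, and $(C_1,C_2,C_3)$ a tripartition of $V$ such that for each $i\in\{1,2,3\}$, $f(C_i)<f(W)/2$ and $W$ directly orients $C_i$. Then $(C_1,C_2,C_3)$ is a $W$-improvement.
   Context: A connectivity function $f:2^V\to\mathbb{Z}_{\ge0}$ ($V$ finite) satisfies $f(\emptyset)=0$, $f(X)=f(V\setminus X)$, and $f(X\cup Y)+f(X\cap Y)\le f(X)+f(Y)$. Write $\overline{X}=V\setminus X$. The set $W$ directly orients $C$ if $f(C\cap W)<f(\overline{C}\cap W)$ and $f(C\cap\overline{W})<f(\overline{C}\cap\overline{W})$. A tripartition of $V$ is a triple of pairwise disjoint (possibly empty) sets with union $V$. For $W\subseteq V$, a $W$-improvement is a tripartition $(C_1,C_2,C_3)$ of $V$ with $f(C_i)<f(W)/2$, $f(C_i\cap W)<f(W)$, $f(C_i\cap\overline{W})<f(W)$ for each $i$. *)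

From mathcomp Require Import all_boot.
Set Implicit Arguments. Unset Strict Implicit. Unset Printing Implicit Defensive.

Definition connectivity_function (V : finType) (f : {set V} -> nat) : Prop :=
  [/\ f set0 = 0,
      (forall X : {set V}, f X = f (~: X)) &
      (forall X Y : {set V}, f (X :|: Y) + f (X :&: Y) <= f X + f Y)].

Definition directly_orients (V : finType) (f : {set V} -> nat) (W C : {set V}) : Prop :=
  f (C :&: W) < f (~: C :&: W) /\ f (C :&: ~: W) < f (~: C :&: ~: W).

Definition tripartition (V : finType) (C1 C2 C3 : {set V}) : Prop :=
  [/\ [disjoint C1 & C2], [disjoint C1 & C3], [disjoint C2 & C3] &
      C1 :|: C2 :|: C3 = [set: V]].

(* f(C) < f(W)/2, stated exactly over nat as 2 f(C) < f(W) *)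
Definition half_lt (V : finType) (f : {set V} -> nat) (W C : {set V}) : Prop :=
  2 * f C < f W.

Definition W_improvement (V : finType) (f : {set V} -> nat) (W C1 C2 C3 : {set V}) : Prop :=
  tripartition C1 C2 C3 /\
  forall C, C \in [:: C1; C2; C3] ->
    [/\ half_lt f W C, f (C :&: W) < f W & f (C :&: ~: W) < f W].

From mathcomp Require Import all_boot.
From mathcomp Require Import zify.

Set Implicit Arguments.
Unset Strict Implicit.

(* Symmetry and submodularity make f posimodular.  Posimodularity applied to W
   and C, and to W and the complement of C, together with subadditivity on the
   split of the complement of W, give f(C ∩ W) + f(C̄ ∩ W) <= f(W) + 2 f(C) < 2 f(W).
   If W directly orients C, the first summand is the smaller one, hence below
   f(W); the same argument with W replaced by its complement handles C ∩ W̄. *)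

Section ConnectivityFunction.

Variables (V : finType) (f : {set V} -> nat).
Hypothesis f_conn : connectivity_function f.

Lemma conn_setC X : f (~: X) = f X.
Proof. by case: f_conn => _ fC _; rewrite fC setCK. Qed.

Lemma conn_submod X Y : f (X :|: Y) + f (X :&: Y) <= f X + f Y.
Proof. by case: f_conn. Qed.

Lemma conn_subadd X Y : f (X :|: Y) <= f X + f Y.
Proof. exact: leq_trans (leq_addr _ _) (conn_submod X Y). Qed.

Lemma conn_posimod X Y : f (X :\: Y) + f (Y :\: X) <= f X + f Y.
Proof.
have := conn_submod X (~: Y).
by rewrite -conn_setC setCU setCK conn_setC addnC -setDE setIC -setDE.
Qed.

Lemma conn_splitI_le W C : f (C :&: W) + f (~: C :&: W) <= f W + 2 * f C.
Proof.
have subW : f W <= f (C :&: ~: W) + f (~: C :&: ~: W).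
  by rewrite -conn_setC -{1}[~: W]setTI -(setUCr C) setIUl conn_subadd.
have posC := conn_posimod W C.
have posCc := conn_posimod W (~: C).
rewrite !setDE setCK conn_setC in posC posCc.
rewrite [W :&: C]setIC [W :&: ~: C]setIC in posC posCc.
lia.
Qed.

Lemma conn_oriented_part_lt W C :
  2 * f C < f W -> f (C :&: W) < f (~: C :&: W) -> f (C :&: W) < f W.
Proof. by move: (conn_splitI_le W C); lia. Qed.

End ConnectivityFunction.

Theorem lemma4 (V : finType) (f : {set V} -> nat) (W C1 C2 C3 : {set V}) :
  connectivity_function f ->
  tripartition C1 C2 C3 ->
  (forall C, C \in [:: C1; C2; C3] -> half_lt f W C /\ directly_orients f W C) ->
  W_improvement f W C1 C2 C3.
Proof.
move=> f_conn C_part hC; split=> // C /hC [C_half [orW orWc]]; split=> //.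
  exact: conn_oriented_part_lt.
rewrite -(conn_setC f_conn W).
by apply: conn_oriented_part_lt; rewrite ?conn_setC.
Qed.
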